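(* Let $p_0,p_1,p_2$ be positive integers with $\gcd(p_0,p_1,p_2)=1$, and put $n=p_0+p_1+p_2$. Let $E=(\mathbb{Z}/n\mathbb{Z})\times\{0,1,2\}$ and define permutations $\sigma_0,\sigma_1$ of $E$ by $$\sigma_0(m,0)=(m,1),\quad \sigma_0(m,1)=(m,2),\quad \sigma_0(m,2)=(m,0),$$ $$\sigma_1(m,0)=(m-p_1,2),\quad \sigma_1(m,1)=(m-p_2,0),\quad \sigma_1(m,2)=(m-p_0,1),$$ with arithmetic in the first coordinate modulo $n$. Let $G=\langle\sigma_0,\sigma_1\rangle$, $N=\langle\sigma_0\sigma_1,\sigma_1\sigma_0\rangle$ and $H=\langle\sigma_0\rangle$. Then $NH=G$.
   Context: These $\sigma_0,\sigma_1$ are the monodromy permutations of the dessin drawn on the rational billiards surface of the triangle with angles $(p_0\pi/n,p_1\pi/n,p_2\pi/n)$, acting on its $3n$ edges labeled $(m,i)$; $G$ is its monodromy group. Products are composition of functions, and $NH=\{xh: x\in N,\ h\in H\}$. *)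

From mathcomp Require Import all_boot all_order all_fingroup.
Set Implicit Arguments. Unset Strict Implicit. Unset Printing Implicit Defensive.



Definition edge (n : nat) := ('I_n * 'I_3)%type.

Lemma ord_pos n (m : 'I_n) : 0 < n.
Proof. by case: m => m /= /(leq_ltn_trans (leq0n m)). Qed.

Definition subm n (m : 'I_n) (k : nat) : 'I_n :=
  Ordinal (ltn_pmod (m + (n - k %% n)) (ord_pos m)).

Arguments subm : simpl never.

Definition i0 : 'I_3 := @Ordinal 3 0 isT.
Definition i1 : 'I_3 := @Ordinal 3 1 isT.
Definition i2 : 'I_3 := @Ordinal 3 2 isT.

Definition sigma0_fun n (e : edge n) : edge n :=
  let: (m, i) := e in
  if val i == 0 then (m, i1) else if val i == 1 then (m, i2) else (m, i0).

Definition sigma1_fun (p0 p1 p2 : nat) n (e : edge n) : edge n :=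
  let: (m, i) := e in
  if val i == 0 then (subm m p1, i2)
  else if val i == 1 then (subm m p2, i0) else (subm m p0, i1).

Lemma subm_inj n k : injective (fun m : 'I_n => subm m k).
Proof.
move=> a b /(congr1 val) /= /eqP; rewrite eqn_modDr => /eqP.
by rewrite !modn_small // => /val_inj.
Qed.

Lemma subm_eq n k (a b : 'I_n) :
  (a + (n - k %% n)) %% n = (b + (n - k %% n)) %% n -> a = b.
Proof. by move=> E; apply: (@subm_inj n k); apply: val_inj. Qed.

Lemma sigma0_inj n : injective (@sigma0_fun n).
Proof.
move=> [m i] [m' i'] /=.
case: i => [[|[|[|?]]] Hi] //=; case: i' => [[|[|[|?]]] Hi'] //= [] ->;
  try (by []);
  by congr pair; apply: val_inj.
Qed.

Lemma sigma1_inj p0 p1 p2 n : injective (@sigma1_fun p0 p1 p2 n).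
Proof.
move=> [m i] [m' i'] /=.
case: i => [[|[|[|?]]] Hi] //=; case: i' => [[|[|[|?]]] Hi'] //= [] /subm_eq ->;
  try (by []);
  by congr pair; apply: val_inj.
Qed.

Definition sigma0 n : {perm edge n} := perm (@sigma0_inj n).
Definition sigma1 p0 p1 p2 n : {perm edge n} := perm (@sigma1_inj p0 p1 p2 n).

(* Composition of functions: (compp s t) x = s (t x); in mathcomp {perm}
   the product s * t means "first s then t", so compp s t = t * s. *)
Definition compp T (s t : {perm T}) : {perm T} := (t * s)%g.

Definition setcomp T (A B : {set {perm T}}) : {set {perm T}} :=
  [set compp x h | x in A, h in B].

(* Both generators have order 3: s0 cycles the three edges at a vertex, and
   s1^3 shifts the vertex by p0 + p1 + p2 = n.  In any group generated by two
   elements a, b of order 3, conjugation by a maps a*b to b*a and b*a to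
   (b*a)^-1 (a*b)^-1, so a normalises N = <a*b, b*a>; hence <a> N is a
   subgroup, and it contains a and b = a^-1 (a*b). *)

From mathcomp Require Import all_boot all_order all_fingroup zify.
Local Open Scope group_scope.

Lemma invg_cube {gT : finGroupType} {x : gT} : x ^+ 3 = 1 -> x^-1 = x * x.
Proof. by move=> x3; apply/eqP; rewrite eq_invg_mul -expg2 -expgS x3. Qed.

Section CubeGenerated.
Variables (gT : finGroupType) (a b : gT).
Hypotheses (a3 : a ^+ 3 = 1) (b3 : b ^+ 3 = 1).

Lemma conjg_mul_cube : (b * a) ^ a = (b * a)^-1 * (a * b)^-1.
Proof.
have bV2 : b^-1 * b^-1 = b.
  by rewrite (invg_cube b3) -!mulgA -expg2 -expgS b3 mulg1.
by rewrite /conjg !invMg -!mulgA (mulgA b^-1) bV2 -(invg_cube a3).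
Qed.

Lemma gen_mul_cube_norm : a \in 'N(<<[set b * a; a * b]>>).
Proof.
set N := <<_>>.
have baN : b * a \in N by rewrite mem_gen // !inE eqxx.
have abN : a * b \in N by rewrite mem_gen // !inE eqxx orbT.
have sNaN : N :^ a \subset N.
  rewrite -genJ gen_subG conjUg !conjg_set1 subUset !sub1set conjg_mul_cube.
  by rewrite -/N groupM ?groupV // /conjg -mulgA mulKg.
by apply/normP/eqP; rewrite eqEcard sNaN cardJg leqnn.
Qed.

Lemma mul_gen_cube :
  <<[set a]>> * <<[set b * a; a * b]>> = <<[set a; b]>>.
Proof.
set H := <<_>>; set N := <<_>>.
have nNH : H \subset 'N(N) by rewrite gen_subG sub1set gen_mul_cube_norm.
rewrite -(comm_joingE (normC nNH)); apply/eqP; rewrite eqEsubset.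
apply/andP; split.
  rewrite join_subG !gen_subG !sub1set mem_gen ?inE ?eqxx //=.
  by apply/subsetP=> _ /set2P[] ->; rewrite groupM // mem_gen // !inE eqxx ?orbT.
have aHN : a \in H <*> N by rewrite mem_gen // inE mem_gen // inE eqxx.
have abHN : a * b \in H <*> N.
  by rewrite mem_gen // inE orbC mem_gen // !inE eqxx orbT.
have bHN : b \in H <*> N by rewrite -(mulKg a b) groupM ?groupV.
by rewrite gen_subG subUset !sub1set aHN bHN.
Qed.

End CubeGenerated.

Lemma setcompE T (A B : {set {perm T}}) : setcomp A B = B * A.
Proof.
by apply/setP=> y; apply/imset2P/imset2P=> -[u v uA vB ->]; exists v u.
Qed.

Lemma subm_addK n (m : 'I_n) k : subm m k + k = m %[mod n].
Proof.
have ltkn : k %% n < n by rewrite ltn_pmod // (ord_pos m).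
rewrite modnDml -addnA -modnDmr -(modnDmr (n - _)).
by rewrite subnK ?modnn ?addn0 // ltnW.
Qed.

Lemma ord_eq_mod n (r r' : 'I_n) : r = r' %[mod n] -> r = r'.
Proof. by rewrite !modn_small // => /val_inj. Qed.

Lemma subm_add n (m : 'I_n) x y : subm (subm m x) y = subm m (x + y).
Proof.
apply/ord_eq_mod/eqP; rewrite -(eqn_modDr (x + y)); apply/eqP.
by rewrite (addnC x) addnA -modnDml subm_addK modnDml !subm_addK.
Qed.

Lemma subm_modulus n (m : 'I_n) : subm m n = m.
Proof.
by apply/ord_eq_mod/eqP; rewrite -(eqn_modDr n) subm_addK modnDr.
Qed.

Lemma sigma0_cube n : sigma0 n ^+ 3 = 1.
Proof.
apply/permP=> -[m [[|[|[|k]]] lti]] //.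
all: rewrite !expgS expg0 mulg1 !permM perm1 !permE //=.
all: by congr pair; apply: val_inj.
Qed.

Lemma sigma1_cube p0 p1 p2 : sigma1 p0 p1 p2 (p0 + p1 + p2) ^+ 3 = 1.
Proof.
apply/permP=> -[m [[|[|[|k]]] lti]] //.
all: rewrite !expgS expg0 mulg1 !permM perm1 !permE /= !subm_add.
all: congr pair; last by apply: val_inj.
all: rewrite -[RHS]subm_modulus; congr subm; lia.
Qed.

Theorem lemma6 (p0 p1 p2 : nat) :
  (0 < p0)%N -> (0 < p1)%N -> (0 < p2)%N -> gcdn (gcdn p0 p1) p2 = 1%N ->
  let n := p0 + p1 + p2 in
  let s0 : {perm edge n} := sigma0 n in
  let s1 : {perm edge n} := sigma1 p0 p1 p2 n in
  let G := <<[set s0; s1]>> in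
  let N := <<[set compp s0 s1; compp s1 s0]>> in
  let H := <<[set s0]>> in
  setcomp N H = G.
Proof.
move=> _ _ _ _ n s0 s1 G N H.
by rewrite setcompE mul_gen_cube ?sigma0_cube ?sigma1_cube.
Qed.
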